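(* Let $G$ be a finite undirected graph, let $\tau\ge 1$ and $k$ be integers, and let $G'$ be the $(k,\tau)$-truss of $G$. Then for every vertex $v\in V(G')$ we have $d_\tau(v,G')\ge k-1$.
   Context: Graphs are finite, simple, undirected and unweighted. A path may repeat vertices; its length is its number of edges. For vertices $v,u$ of a graph $H$, $u$ is $\tau$-hop reachable from $v$ in $H$ if $H$ contains a path between $u$ and $v$ of length at most $\tau$. $N_\tau(v,H)$ is the set of vertices $u\neq v$ that are $\tau$-hop reachable from $v$ in $H$, and $d_\tau(v,H)=|N_\tau(v,H)|$. For an edge $e=(u,v)$ of $H$, $\Delta_\tau(e,H)=N_\tau(u,H)\cap N_\tau(v,H)$ (the $\tau$-hop common neighbors of $e$) and the higher-order support is $\mathrm{sup}_\tau(e,H)=|\Delta_\tau(e,H)|$. The $(k,\tau)$-truss of $G$ is the maximal subgraph $G'$ of $G$ such that $\mathrm{sup}_\tau(e,G')\ge k-2$ for every edge $e\in E(G')$ (supports computed inside $G'$) and no more edges of $G$ can be added while keeping this property; a subgraph is determined by its edge set, its vertex set $V(G')$ being the set of endpoints of its edges. *)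

From mathcomp Require Import all_boot all_order all_algebra.
Set Implicit Arguments. Unset Strict Implicit. Unset Printing Implicit Defensive.

(* A graph G on a finite vertex type T is a symmetric irreflexive relation e.
   Edges are unordered pairs, represented as 2-element sets {x, y}.
   A subgraph is determined by its edge set F : {set {set T}}. *)

Section Truss.
Variable T : finType.

Definition edges (e : rel T) : {set {set T}} :=
  [set [set x; y] | x in T, y in T & e x y].

Definition adjF (F : {set {set T}}) : rel T :=
  fun x y => (x != y) && ([set x; y] \in F).

Definition vertsF (F : {set {set T}}) : {set T} :=
  [set v | [exists u, adjF F v u]].

(* u is t-hop reachable from v in F: a walk (vertices may repeat) of
   length n <= t from v to u *)
Definition hop_reach (F : {set {set T}}) (t : nat) (v u : T) : bool :=
  [exists n : 'I_t.+1, exists s : n.-tuple T,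
     path (adjF F) v s && (last v s == u)].

Definition hopN (F : {set {set T}}) (t : nat) (v : T) : {set T} :=
  [set u | (u != v) && hop_reach F t v u].

Definition hopdeg (F : {set {set T}}) (t : nat) (v : T) : nat :=
  #|hopN F t v|.

Definition hopsup (F : {set {set T}}) (t : nat) (u v : T) : nat :=
  #|hopN F t u :&: hopN F t v|.

Definition truss_ok (k : int) (t : nat) (F : {set {set T}}) : bool :=
  [forall u, forall v, adjF F u v ==> (k - 2 <= (hopsup F t u v)%:Z)%R].

Definition is_truss (e : rel T) (k : int) (t : nat) (F : {set {set T}}) : Prop :=
  maxset (fun F' : {set {set T}} => (F' \subset edges e) && truss_ok k t F') F.

End Truss.

From mathcomp Require Import all_boot all_order all_algebra.
From mathcomp Require Import zify.

Set Implicit Arguments.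
Unset Strict Implicit.

(* A vertex v of the truss has a neighbour u in it.  The edge (v,u) has at
   least k - 2 common t-hop neighbours, all of them t-hop neighbours of v,
   and u itself is one more t-hop neighbour of v that is not common (it is
   not a neighbour of itself); hence d_t(v) >= k - 1. *)

Section HopNeighbours.
Variable T : finType.
Implicit Types (F : {set {set T}}) (u v : T).

Lemma adjF_hopN F t v u : (0 < t)%N -> adjF F v u -> u \in hopN F t v.
Proof.
move=> t_gt0 vu; rewrite inE; apply/andP; split.
  by move: vu; rewrite /adjF eq_sym => /andP [].
apply/existsP; exists (Ordinal (t_gt0 : 1 < t.+1)%N).
by apply/existsP; exists [tuple u]; rewrite /= vu eqxx.
Qed.

Lemma hopsup_lt_hopdeg F t v u :
  (0 < t)%N -> adjF F v u -> (hopsup F t v u < hopdeg F t v)%N.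
Proof.
move=> t_gt0 vu; rewrite /hopsup /hopdeg.
set common := hopN F t v :&: hopN F t u.
have u_notin_common : u \notin common by rewrite !inE eqxx andbF.
have sub : u |: common \subset hopN F t v.
  by apply/subsetP => x /setU1P [-> | /setIP []//]; exact: adjF_hopN.
by apply: leq_trans (subset_leq_card sub); rewrite cardsU1 u_notin_common.
Qed.

Lemma truss_hopsup e k t F u v :
  is_truss e k t F -> adjF F u v -> (k - 2 <= (hopsup F t u v)%:Z)%R.
Proof.
by case/maxsetp/andP => _ /forallP/(_ u)/forallP/(_ v)/implyP; apply.
Qed.

End HopNeighbours.

Theorem mainTheorem1 (T : finType) (e : rel T)
  (e_sym : symmetric e) (e_irr : irreflexive e)
  (t : nat) (k : int) (F : {set {set T}}) :
  (1 <= t)%N ->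
  is_truss e k t F ->
  forall v, v \in vertsF F -> (k - 1 <= (hopdeg F t v)%:Z)%R.
Proof.
move=> t_gt0 truss v; rewrite inE => /existsP [u vu].
have sup_ge := truss_hopsup truss vu.
have sup_lt := hopsup_lt_hopdeg t_gt0 vu.
lia.
Qed.
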